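(* Let $\mathcal S$ be a Stone pseudovariety and $S$ a Stone topological algebra which is residually $\mathcal S$. Then every finite quotient of $S$ belongs to $\mathcal S$; that is, if $\alpha:S\to F$ is an onto continuous homomorphism onto a finite discrete algebra $F$, then $F\in\mathcal S$.
   Context: All algebras are topological $\Omega$-algebras over a fixed topological signature $\Omega=\biguplus_n\Omega_n$ (continuous evaluation maps $\Omega_n\times A^n\to A$). A Stone topological algebra is one whose space is compact Hausdorff and 0-dimensional. A Stone pseudovariety is a nonempty class of Stone topological algebras closed under images by onto continuous homomorphisms that are Stone topological algebras, closed subalgebras, and finite direct products. $S$ is residually $\mathcal S$ if any two distinct elements of $S$ are separated by a continuous homomorphism into a member of $\mathcal S$. *)

From HB Require Import structures.
From mathcomp Require Import all_boot all_order all_algebra.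
From mathcomp Require Import all_classical all_reals all_analysis.
Set Implicit Arguments. Unset Strict Implicit. Unset Printing Implicit Defensive.
Local Open Scope classical_set_scope.

(** A topological signature: Omega n is the (topological) space of n-ary
    operation symbols; Omega = disjoint union of the Omega n. *)
Definition signature := nat -> topologicalType.

Record talg (Omega : signature) := TAlg {
  carrier :> topologicalType;
  op : forall n, Omega n -> ('I_n -> carrier) -> carrier;
  op_cont : forall n,
    continuous (fun p : (Omega n * {ptws 'I_n -> carrier})%type => op p.1 p.2)
}.
Arguments op {Omega} _ {n}.

Section Defs.
Variable Omega : signature.

Definition is_hom (A B : talg Omega) (f : A -> B) : Prop :=
  forall n (o : Omega n) (xs : 'I_n -> A), f (op A o xs) = op B o (f \o xs).

Definition zero_dim (T : topologicalType) : Prop :=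
  forall (U : set T) (x : T), open U -> U x ->
    exists V : set T, [/\ clopen V, V x & V `<=` U].

Definition stone_talg (A : talg Omega) : Prop :=
  [/\ compact [set: A], hausdorff_space A & zero_dim A].

Definition chom (A B : talg Omega) (f : A -> B) : Prop :=
  continuous f /\ is_hom f.

(** Stone pseudovariety.  Classes of algebras are predicates on [talg Omega];
    (closed) subalgebras and finite direct products are described up to
    isomorphism through the maps realising them. *)
Definition stone_pseudovariety (V : talg Omega -> Prop) : Prop :=
  [/\ exists A, V A,
      (forall A, V A -> stone_talg A),
      (forall (A B : talg Omega) (f : A -> B), V A -> stone_talg B ->
          chom f -> (forall y, exists x, f x = y) -> V B),
      (* closed subalgebras: B embedded in A by an injective continuous hom
         (with B Stone, its image is a closed subalgebra isomorphic to B) *)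
      (forall (A B : talg Omega) (f : B -> A), V A -> stone_talg B ->
          chom f -> injective f -> V B) &
      (* finite direct products: P with projections p_i such that
         x |-> (p_i x)_i is a bijection onto prod_i A_i (P Stone, so this is
         an isomorphism of topological algebras onto the product) *)
      (forall (I : finType) (A : I -> talg Omega) (P : talg Omega)
          (p : forall i, P -> A i),
          (forall i, V (A i)) -> stone_talg P -> (forall i, chom (p i)) ->
          (forall x : (forall i, A i), exists! y : P, forall i, p i y = x i) ->
          V P)].

Definition residually (V : talg Omega -> Prop) (S : talg Omega) : Prop :=
  forall x y : S, x <> y ->
    exists (A : talg Omega) (f : S -> A), [/\ V A, chom f & f x <> f y].

End Defs.

From HB Require Import structures.
From mathcomp Require Import all_boot all_order all_algebra.
From mathcomp Require Import all_classical all_reals all_analysis.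
From mathcomp Require Import finmap.
Set Implicit Arguments. Unset Strict Implicit. Unset Printing Implicit Defensive.
Local Open Scope classical_set_scope.

(* Since F is finite and discrete, the kernel of alpha is open in S x S, so
   the set D of pairs it does not identify is compact.  By residuality each
   (a, b) in D is separated by a continuous homomorphism h into a member of
   the pseudovariety and, that member being zero-dimensional, by a clopen set
   U there; so (a, b) lies in the open box h^-1(U) x h^-1(~U), which misses
   the kernel of h.  Finitely many boxes cover D, and the product beta of the
   corresponding homomorphisms maps into a finite product, hence into the
   pseudovariety, with kernel contained in that of alpha.  Thus alpha factors
   through the image of beta, a closed subalgebra of a member of the
   pseudovariety; the factor map is continuous because that image is compact
   Hausdorff, so F is a continuous homomorphic image of it. *)

Lemma zero_dimensional_hausdorff (T : topologicalType) :
  zero_dimensional T -> hausdorff_space T.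
Proof.
move=> zdT; rewrite open_hausdorff => x y /zdT [U [[oU cU] Ux nUy]].
exists (U, ~` U); first by split; apply/mem_set.
split => //; first exact: closed_openC.
by rewrite setICr.
Qed.

Lemma zero_dim_zero_dimensional (T : topologicalType) :
  hausdorff_space T -> zero_dim T -> zero_dimensional T.
Proof.
move=> hT zdT x y /eqP xy.
have cy : closed [set y].
  exact: @accessible_closed_set1 _ (hausdorff_accessible hT) y.
have [|V [cV Vx VU]] := zdT (~` [set y]) x (closed_openC cy); first exact: xy.
by exists V; split => // /VU; apply.
Qed.

Lemma zero_dimensional_zero_dim (T : topologicalType) :
  compact [set: T] -> hausdorff_space T -> zero_dimensional T -> zero_dim T.
Proof.
move=> cT hT zdT U x oU Ux.
have := zero_dimensional_cvg hT zdT cT (open_nbhs_nbhs (conj oU Ux)).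
by move=> [D [Dx cD] DU]; exists D.
Qed.

Lemma compact_cover_compact (T : topologicalType) (A : set T) :
  compact A -> cover_compact A.
Proof.
case: (pselect (exists x : T, True)) => [[x _]|T0] cA.
  (* [compact_cover] is only stated for pointed spaces. *)
  pose Tx := HB.pack_for ptopologicalType T (isPointed.Build T x).
  by have : @compact Tx A := cA; rewrite compact_cover.
by move=> I D f _ _; exists fset0 => // y; case: T0; exists y.
Qed.

Lemma open_setX (U V : topologicalType) (P : set U) (Q : set V) :
  open P -> open Q -> open (P `*` Q).
Proof.
rewrite !openE => oP oQ [a b] [Pa Qb].
by exists (P, Q) => //; split; [exact: oP|exact: oQ].
Qed.

Lemma continuous_prod_topology (X : topologicalType) (I : Type)
    (T : I -> topologicalType) (g : X -> prod_topology T) :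
  (forall i, continuous (fun x => g x i)) -> continuous g.
Proof.
move=> cg x; apply/cvg_sup => i.
have : continuous (g : X -> initial_topology (fun f : forall i, T i => f i)).
  exact: continuous_comp_initial.
exact.
Qed.

Lemma continuous_eval (I : Type) (T : I -> topologicalType) (i : I) :
  continuous (fun f : prod_topology T => f i).
Proof. exact: @proj_continuous {classic I} T i. Qed.

Lemma continuous_ptws_comp (I : Type) (X Y : topologicalType) (f : X -> Y) :
  continuous f ->
  continuous (fun xs : {ptws I -> X} => f \o xs : {ptws I -> Y}).
Proof.
move=> cf; apply: continuous_prod_topology => i xs.
apply: (@continuous_comp _ _ _ (fun xs : {ptws I -> X} => xs i)).
  exact: continuous_eval.
exact: cf.
Qed.

Lemma continuous_pair (Z X Y : topologicalType) (f : Z -> X) (g : Z -> Y) :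
  continuous f -> continuous g -> continuous (fun z => (f z, g z)).
Proof. by move=> cf cg z; apply: cvg_pair; [exact: cf|exact: cg]. Qed.

Lemma continuous_set_val (X : topologicalType) (A : set X) :
  continuous (set_val : set_type A -> X).
Proof. exact: initial_continuous. Qed.

Lemma compact_quotient_continuous (X Y Z : topologicalType)
    (q : X -> Y) (g : Y -> Z) :
  compact [set: X] -> hausdorff_space Y -> continuous q ->
  (forall y, exists x, q x = y) -> continuous (g \o q) -> continuous g.
Proof.
move=> cX hY cq q_onto cgq; apply/continuous_closedP => C cC.
have -> : g @^-1` C = q @` ((g \o q) @^-1` C).
  apply/seteqP; split => [y Cgy|_ [x Cgqx <-] //].
  by have [x qxy] := q_onto y; exists x; rewrite //= qxy.
apply: compact_closed => //; apply: continuous_compact.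
  exact: continuous_subspaceT.
by apply: subclosed_compact cX _ => //; move/continuous_closedP: cgq; apply.
Qed.

Section TopologicalAlgebras.
Variable Omega : signature.
Implicit Types A B C P S F : talg Omega.

Lemma stone_talgP A : stone_talg A <-> compact [set: A] /\ zero_dimensional A.
Proof.
split=> [[cA hA zA]|[cA zA]].
  by split=> //; exact: zero_dim_zero_dimensional.
have hA := zero_dimensional_hausdorff zA.
by split=> //; exact: zero_dimensional_zero_dim.
Qed.

Lemma stone_finite_discrete F :
  finite_set [set: F] -> (forall U : set F, open U) -> stone_talg F.
Proof.
move=> finF discF; apply/stone_talgP; split; first exact: finite_compact.
move=> x y /eqP xy; exists [set x]; split => //; last exact/nesym.
by split; [|rewrite -openC]; exact: discF.
Qed.

Lemma is_hom_factor A B C (q : A -> B) (g : B -> C) :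
  is_hom q -> (forall y, exists x, q x = y) -> is_hom (g \o q) -> is_hom g.
Proof.
move=> hq q_onto hgq n o ys.
have [xs qxs] := choice (fun k => q_onto (ys k)).
have -> : ys = q \o xs by apply: funext => k; rewrite /= qxs.
by rewrite -hq; exact: hgq.
Qed.

Lemma op_comp_continuous A (X : topologicalType) (f : X -> A) n :
  continuous f ->
  continuous (fun p : (Omega n * {ptws 'I_n -> X})%type => op A p.1 (f \o p.2)).
Proof.
move=> cf p.
apply: (@continuous_comp _ _ _
    (fun p : (Omega n * {ptws 'I_n -> X})%type =>
       (p.1, f \o p.2) : (Omega n * {ptws 'I_n -> A})%type)
    (fun q => op A q.1 q.2)); last exact: op_cont.
apply: continuous_pair => [q|q]; first exact: cvg_fst.
by apply: continuous_comp; [exact: cvg_snd|exact: continuous_ptws_comp].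
Qed.

Section Product.
Variables (I : Type) (A : I -> talg Omega).

Definition prod_talg : talg Omega :=
  @TAlg Omega (prod_topology (fun i => A i : topologicalType))
    (fun n o xs i => op (A i) o (fun k => xs k i))
    (fun n => continuous_prod_topology (fun i =>
       op_comp_continuous
         (@continuous_eval _ (fun i => A i : topologicalType) i))).

Lemma chom_proj i : chom (fun x : prod_talg => x i).
Proof. by split=> //; exact: continuous_eval. Qed.

Lemma chom_into_prod (X : talg Omega) (h : forall i, X -> A i) :
  (forall i, chom (h i)) -> chom (fun x => (fun i => h i x) : prod_talg).
Proof.
move=> ch; split.
  by apply: continuous_prod_topology => i; exact: (ch i).1.
move=> n o xs; apply: functional_extensionality_dep => i.
exact: (ch i).2.
Qed.

End Product.

Lemma stone_prod_talg (I : choiceType) (A : I -> talg Omega) :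
  (forall i, stone_talg (A i)) -> stone_talg (prod_talg A).
Proof.
move=> stA; have {}stA i := (stone_talgP (A i)).1 (stA i).
apply/stone_talgP; split.
  have := tychonoff (fun i => (stA i).1).
  by congr compact; apply/seteqP.
by apply: zero_dimension_prod => i; case: (stA i).
Qed.

Section Image.
Variables (S P : talg Omega) (beta : S -> P).
Hypothesis hom_beta : is_hom beta.

Lemma range_op_closed n (o : Omega n) (ys : 'I_n -> set_type (range beta)) :
  op P o (set_val \o ys) \in range beta.
Proof.
apply/mem_set.
have /choice[xs bxs] : forall k, exists x, beta x = set_val (ys k).
  by move=> k; have [x _ bx] := set_valP (ys k); exists x.
exists (op S o xs) => //; rewrite hom_beta; congr (op P o _).
exact: funext.
Qed.

Definition image_op n (o : Omega n) (ys : 'I_n -> set_type (range beta)) :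
    set_type (range beta) :=
  exist _ (op P o (set_val \o ys)) (range_op_closed o ys).

Lemma image_op_continuous n :
  continuous (fun p : (Omega n * {ptws 'I_n -> set_type (range beta)})%type =>
    image_op p.1 p.2).
Proof. exact/continuous_comp_initial/op_comp_continuous/continuous_set_val. Qed.

Definition image_talg : talg Omega := TAlg image_op_continuous.

Definition corestr (x : S) : image_talg :=
  exist _ (beta x) (mem_set (imageT beta x)).

Lemma corestr_onto (y : image_talg) : exists x, corestr x = y.
Proof.
case: y => y ym; have [x _ bxy] := set_mem ym.
by exists x; exact: eq_sig_hprop.
Qed.

Lemma chom_corestr : continuous beta -> chom corestr.
Proof.
move=> cb; split; first exact: continuous_comp_initial.
by move=> n o xs; apply: eq_sig_hprop; last exact: hom_beta.
Qed.

Lemma chom_set_val : chom (set_val : image_talg -> P).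
Proof. by split=> //; exact: continuous_set_val. Qed.

Lemma stone_image_talg :
  continuous beta -> compact [set: S] -> stone_talg P -> stone_talg image_talg.
Proof.
move=> cb cS /stone_talgP[_ zP]; apply/stone_talgP; split.
  have -> : [set: image_talg] = corestr @` setT.
    by apply/seteqP; split => y // _; have [x <-] := corestr_onto y; exists x.
  apply: continuous_compact => //; apply: continuous_subspaceT.
  exact: (chom_corestr cb).1.
move=> y z yz; have /zP[U [cU Uy nUz]] : set_val y != set_val z.
  by apply: contraNneq yz => /eq_sig_hprop ->.
exists (set_val @^-1` U); split => //.
exact: preimage_clopen cU chom_set_val.1.
Qed.

End Image.

Section Pseudovariety.
Variable V : talg Omega -> Prop.
Hypothesis pvV : stone_pseudovariety V.

Lemma pseudovariety_stone A : V A -> stone_talg A.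
Proof. by case: pvV => _ + _ _ _; apply. Qed.

Lemma pseudovariety_prod (I : finType) (A : I -> talg Omega) :
  (forall i, V (A i)) -> V (prod_talg A).
Proof.
move=> VA; case: pvV => _ _ _ _ Vprod.
apply: (Vprod I A _ (fun i (x : prod_talg A) => x i)) => //.
- by apply: stone_prod_talg => i; exact: pseudovariety_stone.
- exact: chom_proj.
- move=> x; exists x; split=> // y yx.
  exact: functional_extensionality_dep.
Qed.

Lemma pseudovariety_image S P (beta : S -> P) (hom_beta : is_hom beta) :
  V P -> continuous beta -> compact [set: S] -> V (image_talg hom_beta).
Proof.
move=> VP cb cS; case: pvV => _ _ _ Vsub _.
apply: (Vsub P (image_talg hom_beta) set_val VP).
- exact: stone_image_talg cb cS (pseudovariety_stone VP).
- exact: chom_set_val.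
- by move=> y z; exact: eq_sig_hprop.
Qed.

Lemma pseudovariety_factor S P F (beta : S -> P) (alpha : S -> F) :
  V P -> compact [set: S] -> stone_talg F -> chom beta -> chom alpha ->
  (forall y, exists x, alpha x = y) ->
  (forall x y, beta x = beta y -> alpha x = alpha y) -> V F.
Proof.
move=> VP cS stF [cb hb] [ca ha] alpha_onto kb.
pose q := corestr hb; have q_onto := @corestr_onto _ _ _ hb.
have [g gq] : exists g : image_talg hb -> F, g \o q = alpha.
  have /choice[g gP] : forall y : image_talg hb,
      exists z, forall x, q x = y -> alpha x = z.
    move=> y; have [x0 <-] := q_onto y.
    by exists (alpha x0) => x /(congr1 val) /kb.
  by exists g; apply: funext => x; rewrite /= (gP (q x) x).
have [cq hq] := chom_corestr hb cb.
have [_ hI _] := stone_image_talg hb cb cS (pseudovariety_stone VP).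
case: pvV => _ _ Vimg _ _.
apply: (Vimg _ F g (pseudovariety_image hb VP cb cS) stF); last first.
  by move=> y; have [x <-] := alpha_onto y; exists (q x); rewrite -gq.
split.
  by apply: (compact_quotient_continuous cS hI cq q_onto); rewrite gq.
by apply: (is_hom_factor hq q_onto); rewrite gq.
Qed.

Lemma residually_clopen_separation S (a b : S) : residually V S -> a <> b ->
  exists (A : talg Omega) (h : S -> A) (U : set A),
    [/\ V A, chom h, clopen U, U (h a) & ~ U (h b)].
Proof.
move=> resS /resS[A [h [VA ch hab]]].
have /stone_talgP[_ zA] := pseudovariety_stone VA.
have /zA[U [cU Ua nUb]] : h a != h b by apply/eqP.
by exists A, h, U.
Qed.

Lemma residually_finite_separation S (T : Type) (f : S -> T) :
  compact [set: S] -> residually V S -> open [set p : S * S | f p.1 = f p.2] ->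
  exists (J : finType) (A : J -> talg Omega) (h : forall j, S -> A j),
    [/\ forall j, V (A j), forall j, chom (h j) &
        forall x y, f x <> f y -> exists j, h j x <> h j y].
Proof.
move=> cS resS oK.
pose I := {p : S * S | `[< f p.1 <> f p.2 >]}.
have /choice[sep sepP] : forall i : I,
    exists t : {A : talg Omega & ((S -> A) * set A)%type},
    [/\ V (projT1 t), chom (projT2 t).1, clopen (projT2 t).2,
        (projT2 t).2 ((projT2 t).1 (val i).1)
      & ~ (projT2 t).2 ((projT2 t).1 (val i).2)].
  move=> [[a b] /= /asboolP fab].
  have [|A [h [U sepU]]] := residually_clopen_separation (a := a) (b := b) resS.
    by move=> eab; apply: fab; rewrite eab.
  by exists (existT _ A (h, U)).
pose W i := (projT2 (sep i)).1 @^-1` (projT2 (sep i)).2.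
have cD : compact [set p : S * S | f p.1 <> f p.2].
  apply: (subclosed_compact _ (compact_setX cS cS)) => //.
  exact: open_closedC.
have oW i : [set: I] i -> open (W i `*` ~` W i).
  move=> _; have [_ [ch _] cU _ _] := sepP i.
  have [oW cW] := preimage_clopen cU ch.
  by apply: open_setX => //; exact: closed_openC.
have [|J _ coverJ] := compact_cover_compact cD oW.
  move=> p fp; exists (exist _ p (asboolT fp)) => //.
  by have [] := sepP (exist _ p (asboolT fp)).
exists J, (fun j : J => projT1 (sep (val j))).
exists (fun j => (projT2 (sep (val j))).1).
split=> [j|j|x y fxy]; try by case: (sepP (val j)).
have [i Ji [Wx nWy]] := coverJ (x, y) fxy.
by exists (FSetSub Ji) => /= e; apply: nWy; rewrite /W /= -e.
Qed.

Lemma residually_hom_kernel_sub S (T : Type) (f : S -> T) :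
  compact [set: S] -> residually V S -> open [set p : S * S | f p.1 = f p.2] ->
  exists (P : talg Omega) (beta : S -> P),
    [/\ V P, chom beta & forall x y, beta x = beta y -> f x = f y].
Proof.
move=> cS resS oK.
have [J [A [h [VA ch sep]]]] := residually_finite_separation cS resS oK.
exists (prod_talg A), (fun x j => h j x); split.
- exact: pseudovariety_prod.
- exact: chom_into_prod.
- move=> x y bxy; apply: contrapT => /sep[j]; apply.
  exact: (congr1 (fun b => b j) bxy).
Qed.

End Pseudovariety.
End TopologicalAlgebras.

Lemma open_kernel_discrete (X Y : topologicalType) (f : X -> Y) :
  continuous f -> (forall U : set Y, open U) ->
  open [set p : X * X | f p.1 = f p.2].
Proof.
move=> cf discY.
have -> : [set p : X * X | f p.1 = f p.2] =
    \bigcup_(y in [set: Y]) (f @^-1` [set y] `*` f @^-1` [set y]).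
  apply/seteqP; split => [[a b] /= fab|[a b] [y _ [/= -> ->]]] //.
  by exists (f a) => //; split.
by apply: bigcup_open => y _; apply: open_setX; apply: (continuousP f).1.
Qed.

Theorem proposition4p10 (Omega : signature) (V : talg Omega -> Prop)
  (S : talg Omega) (hV : stone_pseudovariety V) (hS : stone_talg S)
  (hres : residually V S)
  (F : talg Omega) (alpha : S -> F)
  (hfin : finite_set [set: F]) (hdisc : forall U : set F, open U)
  (halpha : chom alpha) (hsurj : forall y : F, exists x : S, alpha x = y) :
  V F.
Proof.
have [cS _ _] := hS.
have [P [beta [VP cbeta kbeta]]] :=
  residually_hom_kernel_sub hV cS hres (open_kernel_discrete halpha.1 hdisc).
exact: (pseudovariety_factor hV VP cS (stone_finite_discrete hfin hdisc)
  cbeta halpha hsurj kbeta).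
Qed.
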